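(* Let $s,t\in(0,\pi)$ with $s\ne t$, so that $P=(\cos t,\sin t)$ and $Q=(\cos s,\sin s)$ are two distinct points of the unit circle in the half-plane $y>0$. Consider $$f(u)=\frac{1}{\sqrt{\sin(t+u)}}+\frac{1}{\sqrt{\sin(s+u)}},$$ defined for all $u$ with $\sin(t+u)>0$ and $\sin(s+u)>0$. Then on the interval of definition $I=(-\min(s,t),\ \pi-\max(s,t))$ (which contains $0$), $f$ attains its minimum at $u_{\min}=\frac{\pi}{2}-\frac{s+t}{2}$ (the rotation by angle $u_{\min}$ takes $P,Q$ to points forming a segment parallel to the $x$-axis); $u_{\min}$ is the only critical point of $f$ on $I$, and $f$ is decreasing as $u$ increases in $I$ while $u<u_{\min}$. *)

From Stdlib Require Import Reals.
From Coquelicot Require Import Coquelicot.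
Open Scope R_scope.

Definition fst_fun (s t u : R) : R :=
  / sqrt (sin (t + u)) + / sqrt (sin (s + u)).

Definition inIdom (s t u : R) : Prop :=
  - Rmin s t < u /\ u < PI - Rmax s t.

Definition u_min (s t : R) : R := PI / 2 - (s + t) / 2.

(* With [cos_sin32 x = cos x / sin x ^ (3/2)], the derivative of [/ sqrt (sin x)]
   is [- cos_sin32 x / 2].  The function [cos_sin32] is strictly decreasing on
   (0, PI) and satisfies [cos_sin32 (PI - x) = - cos_sin32 x], so
   [cos_sin32 a + cos_sin32 b] is positive, zero or negative according as
   [a + b] is smaller than, equal to or larger than PI.  For [a = t + u],
   [b = s + u] this says that [f'] is negative before [u_min], vanishes at
   [u_min] and is positive after it; the mean value theorem does the rest. *)
From Stdlib Require Import Reals Lra.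
From Coquelicot Require Import Coquelicot.
Open Scope R_scope.

Lemma decreasing_of_derive_neg (f df : R -> R) (a b : R) :
  a < b -> (forall x, a <= x <= b -> is_derive f x (df x)) ->
  (forall x, a < x < b -> df x < 0) -> f b < f a.
Proof.
intros Hab Hf Hdf.
destruct (MVT_cor2 f df a b Hab) as [c [Hc Hac]].
- intros c Hc. apply is_derive_Reals, Hf, Hc.
- assert (Hdc := Hdf c Hac). nra.
Qed.

Lemma increasing_of_derive_pos (f df : R -> R) (a b : R) :
  a < b -> (forall x, a <= x <= b -> is_derive f x (df x)) ->
  (forall x, a < x < b -> 0 < df x) -> f a < f b.
Proof.
intros Hab Hf Hdf.
destruct (MVT_cor2 f df a b Hab) as [c [Hc Hac]].
- intros c Hc. apply is_derive_Reals, Hf, Hc.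
- assert (Hdc := Hdf c Hac). nra.
Qed.

Definition cos_sin32 (x : R) : R := cos x / (sin x * sqrt (sin x)).

Lemma cos_sin32_PI_minus (x : R) : cos_sin32 (PI - x) = - cos_sin32 x.
Proof.
unfold cos_sin32. rewrite sin_PI_x, Rtrigo_facts.cos_pi_minus. unfold Rdiv. ring.
Qed.

Lemma sin_sqrt_sin_gt0 (x : R) : 0 < x < PI -> 0 < sin x * sqrt (sin x).
Proof.
intros Hx. assert (Hs := sin_gt_0 x (proj1 Hx) (proj2 Hx)).
apply Rmult_lt_0_compat; [exact Hs | apply sqrt_lt_R0, Hs].
Qed.

Lemma cos_sin32_gt0 (x : R) : 0 < x < PI / 2 -> 0 < cos_sin32 x.
Proof.
intros Hx. unfold cos_sin32, Rdiv.
apply Rmult_lt_0_compat; [apply cos_gt_0; lra |].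
apply Rinv_0_lt_compat, sin_sqrt_sin_gt0. lra.
Qed.

Lemma cos_sin32_decreasing_half (a b : R) :
  0 < a -> a < b -> b <= PI / 2 -> cos_sin32 b < cos_sin32 a.
Proof.
intros Ha Hab Hb.
assert (Hcos : cos b < cos a) by (apply cos_decreasing_1; lra).
assert (Hcosb : 0 <= cos b) by (apply cos_ge_0; lra).
assert (Hsin : sin a < sin b) by (apply sin_increasing_1; lra).
assert (Hsina : 0 < sin a) by (apply sin_gt_0; lra).
assert (Hsqrt : sqrt (sin a) < sqrt (sin b)) by (apply sqrt_lt_1; lra).
assert (Hsqrta : 0 < sqrt (sin a)) by (apply sqrt_lt_R0, Hsina).
assert (Hda : 0 < sin a * sqrt (sin a)) by (apply Rmult_lt_0_compat; assumption).
assert (Hd : sin a * sqrt (sin a) < sin b * sqrt (sin b))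
  by (apply Rmult_le_0_lt_compat; lra).
unfold cos_sin32.
apply Rle_lt_trans with (cos b / (sin a * sqrt (sin a))).
- apply Rmult_le_compat_l; [exact Hcosb |].
  left. apply Rinv_lt_contravar; [apply Rmult_lt_0_compat |]; lra.
- apply Rmult_lt_compat_r; [apply Rinv_0_lt_compat |]; lra.
Qed.

Lemma cos_sin32_decreasing (a b : R) :
  0 < a -> a < b -> b < PI -> cos_sin32 b < cos_sin32 a.
Proof.
intros Ha Hab Hb.
destruct (Rle_lt_dec b (PI / 2)) as [Hb2 | Hb2].
{ apply cos_sin32_decreasing_half; lra. }
destruct (Rle_lt_dec (PI / 2) a) as [Ha2 | Ha2].
- assert (H := cos_sin32_decreasing_half (PI - b) (PI - a)
                 ltac:(lra) ltac:(lra) ltac:(lra)).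
  rewrite !cos_sin32_PI_minus in H. lra.
- assert (Hpa := cos_sin32_gt0 a ltac:(lra)).
  assert (Hpb := cos_sin32_gt0 (PI - b) ltac:(lra)).
  rewrite cos_sin32_PI_minus in Hpb. lra.
Qed.

Lemma cos_sin32_add_gt0 (a b : R) :
  0 < a -> 0 < b -> a + b < PI -> 0 < cos_sin32 a + cos_sin32 b.
Proof.
intros Ha Hb Hab.
assert (H := cos_sin32_decreasing a (PI - b) Ha ltac:(lra) ltac:(lra)).
rewrite cos_sin32_PI_minus in H. lra.
Qed.

Lemma cos_sin32_add_lt0 (a b : R) :
  a < PI -> b < PI -> PI < a + b -> cos_sin32 a + cos_sin32 b < 0.
Proof.
intros Ha Hb Hab.
assert (H := cos_sin32_add_gt0 (PI - a) (PI - b) ltac:(lra) ltac:(lra) ltac:(lra)).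
rewrite !cos_sin32_PI_minus in H. lra.
Qed.

Lemma cos_sin32_add_eq0 (a b : R) : a + b = PI -> cos_sin32 a + cos_sin32 b = 0.
Proof.
intros Hab. replace b with (PI - a) by lra. rewrite cos_sin32_PI_minus. ring.
Qed.

Lemma inIdom_between (s t a b x : R) :
  inIdom s t a -> inIdom s t b -> a <= x <= b -> inIdom s t x.
Proof. unfold inIdom. lra. Qed.

Lemma inIdomE (s t u : R) : inIdom s t u <-> 0 < t + u < PI /\ 0 < s + u < PI.
Proof.
unfold inIdom, Rmin, Rmax. destruct (Rle_dec s t); split; intros; lra.
Qed.

Lemma inIdom_u_min (s t : R) :
  0 < s < PI -> 0 < t < PI -> inIdom s t (u_min s t).
Proof. intros hs ht. apply inIdomE. unfold u_min. lra. Qed.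

Definition fst_deriv (s t u : R) : R := - (cos_sin32 (t + u) + cos_sin32 (s + u)) / 2.

Lemma is_derive_fst_fun (s t u : R) :
  inIdom s t u -> is_derive (fst_fun s t) u (fst_deriv s t u).
Proof.
intros Hu. apply inIdomE in Hu.
assert (Ht := sin_gt_0 (t + u) ltac:(lra) ltac:(lra)).
assert (Hs := sin_gt_0 (s + u) ltac:(lra) ltac:(lra)).
assert (Qt := sqrt_lt_R0 _ Ht). assert (Qs := sqrt_lt_R0 _ Hs).
unfold fst_fun, fst_deriv, cos_sin32. auto_derive.
- repeat split; lra.
- rewrite !sqrt_sqrt by lra. field. lra.
Qed.

Lemma fst_deriv_lt0 (s t u : R) : inIdom s t u -> u < u_min s t -> fst_deriv s t u < 0.
Proof.
intros Hu Hm. apply inIdomE in Hu. unfold u_min in Hm. unfold fst_deriv.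
assert (H := cos_sin32_add_gt0 (t + u) (s + u) ltac:(lra) ltac:(lra) ltac:(lra)).
lra.
Qed.

Lemma fst_deriv_gt0 (s t u : R) : inIdom s t u -> u_min s t < u -> 0 < fst_deriv s t u.
Proof.
intros Hu Hm. apply inIdomE in Hu. unfold u_min in Hm. unfold fst_deriv.
assert (H := cos_sin32_add_lt0 (t + u) (s + u) ltac:(lra) ltac:(lra) ltac:(lra)).
lra.
Qed.

Lemma fst_deriv_eq0 (s t u : R) : inIdom s t u -> (fst_deriv s t u = 0 <-> u = u_min s t).
Proof.
intros Hu. split.
- intros H0. destruct (Rtotal_order u (u_min s t)) as [Hlt | [Heq | Hgt]].
  + assert (H := fst_deriv_lt0 s t u Hu Hlt). lra.
  + exact Heq.
  + assert (H := fst_deriv_gt0 s t u Hu Hgt). lra.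
- intros ->. unfold fst_deriv. rewrite cos_sin32_add_eq0.
  + field.
  + unfold u_min. lra.
Qed.

Lemma fst_fun_decreasing (s t u v : R) :
  0 < s < PI -> 0 < t < PI ->
  inIdom s t u -> u < v -> v <= u_min s t -> fst_fun s t v < fst_fun s t u.
Proof.
intros hs ht Hu Huv Hv.
assert (HI : forall x, u <= x <= v -> inIdom s t x).
{ intros x Hx. apply (inIdom_between s t u (u_min s t)); [exact Hu | | lra].
  exact (inIdom_u_min s t hs ht). }
apply (decreasing_of_derive_neg _ (fst_deriv s t)); [exact Huv | |].
- intros x Hx. apply is_derive_fst_fun, HI, Hx.
- intros x Hx. apply fst_deriv_lt0; [apply HI |]; lra.
Qed.

Lemma fst_fun_increasing (s t u v : R) :
  0 < s < PI -> 0 < t < PI ->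
  u_min s t <= u -> u < v -> inIdom s t v -> fst_fun s t u < fst_fun s t v.
Proof.
intros hs ht Hu Huv Hv.
assert (HI : forall x, u <= x <= v -> inIdom s t x).
{ intros x Hx. apply (inIdom_between s t (u_min s t) v); [| exact Hv | lra].
  exact (inIdom_u_min s t hs ht). }
apply (increasing_of_derive_pos _ (fst_deriv s t)); [exact Huv | |].
- intros x Hx. apply is_derive_fst_fun, HI, Hx.
- intros x Hx. apply fst_deriv_gt0; [apply HI |]; lra.
Qed.

Theorem lemma1 (s t : R) (hs : 0 < s < PI) (ht : 0 < t < PI) (hst : s <> t) :
  (* the interval of definition I contains 0 *)
  inIdom s t 0 /\
  (* f attains its minimum on I at umin *)
  inIdom s t (u_min s t) /\
  (forall u, inIdom s t u -> fst_fun s t (u_min s t) <= fst_fun s t u) /\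
  (* umin is the only critical point of f on I *)
  (forall u, inIdom s t u -> (is_derive (fst_fun s t) u 0 <-> u = u_min s t)) /\
  (* f is (strictly) decreasing on I to the left of umin *)
  (forall u v, inIdom s t u -> inIdom s t v -> u < v -> v < u_min s t ->
     fst_fun s t v < fst_fun s t u).
Proof.
split; [apply inIdomE; lra |].
split; [exact (inIdom_u_min s t hs ht) |].
split.
{ intros u Hu. destruct (Rtotal_order u (u_min s t)) as [Hlt | [-> | Hgt]].
  - left. apply fst_fun_decreasing; auto; lra.
  - lra.
  - left. apply fst_fun_increasing; auto; lra. }
split.
{ intros u Hu. rewrite <- (fst_deriv_eq0 s t u Hu).
  assert (Hd := is_derive_fst_fun s t u Hu). split.
  - intros H0. rewrite <- (is_derive_unique _ _ _ Hd). exact (is_derive_unique _ _ _ H0).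
  - intros H0. rewrite <- H0. exact Hd. }
intros u v Hu _ Huv Hv. apply fst_fun_decreasing; auto; lra.
Qed.
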